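(* Let $G$ be a finitely generated group. Then every sequence of almost-invariant probability measures on $G$ measures index uniformly.
   Context: A sequence $(\mu_n)$ of probability measures on $G$ is almost-invariant if $\|x\cdot\mu_n-\mu_n\|_1\to0$ for every $x\in G$, where $x\cdot\mu(A)=\mu(x^{-1}A)$. It measures index uniformly if $\mu_n(xH)\to1/[G:H]$ uniformly over all $x\in G$ and all subgroups $H$ of $G$, with the convention $1/[G:H]=0$ when $H$ has infinite index. *)

From HB Require Import structures.
From mathcomp Require Import all_boot all_order all_algebra.
From mathcomp Require Import finmap.
From mathcomp Require Import all_classical all_reals all_analysis.

Set Implicit Arguments.
Unset Strict Implicit.
Unset Printing Implicit Defensive.

Import Order.TTheory GRing.Theory Num.Theory.
Local Open Scope classical_set_scope.
Local Open Scope ring_scope.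

Section GroupDefs.
Variable G : groupType.

Definition is_subgroup (H : set G) : Prop :=
  [/\ H (@monoid.one G),
      (forall x y, H x -> H y -> H (@monoid.mul G x y)) &
      (forall x, H x -> H (@monoid.inv G x))].

Definition finitely_generated : Prop :=
  exists S : seq G, forall H : set G, is_subgroup H ->
    (forall s, s \in S -> H s) -> H = setT.

Definition lcoset (x : G) (H : set G) : set G := [set @monoid.mul G x h | h in H].

Definition lcosets (H : set G) : set (set G) := [set lcoset x H | x in [set: G]].

(* 1/[G:H], with the convention 1/[G:H] = 0 when the index is infinite *)
Definition inv_index (R : realType) (H : set G) : R :=
  if pselect (finite_set (lcosets H)) then (#|` fset_set (lcosets H)|%:R)^-1
  else 0.

Definition is_prob (R : realType) (mu : G -> R) : Prop :=
  (forall g, 0 <= mu g) /\ (\esum_(g in [set: G]) (mu g)%:E = 1)%E.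

Definition pmeas (R : realType) (mu : G -> R) (A : set G) : \bar R :=
  (\esum_(g in A) (mu g)%:E)%E.

(* || x.mu - mu ||_1 where (x.mu)(A) = mu(x^{-1} A), i.e. (x.mu)(g) = mu(x^{-1} g) *)
Definition transl_dist (R : realType) (mu : G -> R) (x : G) : \bar R :=
  (\esum_(g in [set: G]) (`|mu (@monoid.mul G (@monoid.inv G x) g) - mu g|)%:E)%E.

Definition almost_invariant (R : realType) (mu : nat -> G -> R) : Prop :=
  forall x : G, transl_dist (mu n) x @[n --> \oo] --> 0%E.

Definition measures_index_uniformly (R : realType) (mu : nat -> G -> R) : Prop :=
  forall eps : R, 0 < eps -> exists N : nat, forall n : nat, (N <= n)%N ->
    forall (x : G) (H : set G), is_subgroup H ->
      (`| pmeas (mu n) (lcoset x H) - (inv_index R H)%:E | < eps%:E)%E.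

End GroupDefs.

(* Let T be a finite generating list of G closed under inverses.  For a
   subgroup H, the left cosets of H are the vertices of a connected Schreier
   graph with edges C -- tC (t in T).  Loop erasure turns any path into a
   duplicate-free one, along which the variation of C |-> mu(C) is at most the
   sum, over t in T and distinct cosets C, of |mu(tC) - mu(C)|; since distinct
   cosets are disjoint, for fixed t this is at most ||t^-1.mu - mu||_1.  Hence
   all cosets of H have masses within D := sum_t ||t^-1.mu - mu||_1 of each
   other, uniformly in H.  If [G:H] = k is finite, the k masses sum to 1, so
   each lies within D of 1/k; if the index is infinite, any k cosets have
   total mass at most 1 for every k, so each coset has mass at most D.
   Almost invariance makes D tend to 0. *)

From mathcomp Require Import all_boot all_order all_algebra.
From mathcomp Require Import finmap.
From mathcomp Require Import all_classical all_reals all_analysis.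
From mathcomp Require Import lra.

Set Implicit Arguments.
Unset Strict Implicit.
Unset Printing Implicit Defensive.

Import Order.TTheory GRing.Theory Num.Theory.
Local Open Scope classical_set_scope.
Local Open Scope ring_scope.

Section PathVariation.
Variables (R : numDomainType) (X : eqType) (e : rel X) (f b : X -> R).
Hypothesis f_edge : forall x y, e x y -> `|f y - f x| <= b x.

Lemma path_variation x p :
  path e x p -> `|f (last x p) - f x| <= \sum_(c <- belast x p) b c.
Proof.
elim: p x => [|y p IHp] x /=; first by rewrite subrr normr0 big_nil.
case/andP => /f_edge exy /IHp IH; rewrite big_cons.
by apply: le_trans (ler_distD (f y) _ _) _; rewrite addrC lerD.
Qed.

Lemma uniq_path_variation x p : path e x p ->
  exists V : seq X, [/\ uniq V, {subset V <= x :: p} &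
    `|f (last x p) - f x| <= \sum_(c <- V) b c].
Proof.
case/shortenP => q eq_q uq qp; exists (belast x q); split.
- by move: uq; rewrite lastI rcons_uniq => /andP[].
- move=> c /mem_belast; rewrite !inE => /orP[-> //|/qp cp].
  by rewrite cp orbT.
- exact: path_variation.
Qed.

End PathVariation.

Section Cosets.
Variable G : groupType.
Implicit Types (x y z t : G) (A H : set G).

Lemma lcosetM x y A : lcoset x (lcoset y A) = lcoset (x * y)%g A.
Proof.
apply/seteqP; split => g /=.
- by move=> [_ [h Ah <-] <-]; exists h; rewrite ?mulgA.
- by move=> [h Ah <-]; exists (y * h)%g; [exists h | rewrite mulgA].
Qed.

Lemma lcoset1 A : lcoset 1%g A = A.
Proof.
apply/seteqP; split => g /=; first by move=> [h Ah <-]; rewrite mul1g.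
by move=> Ag; exists g; rewrite ?mul1g.
Qed.

Lemma lcoset_bij t A : set_bij A (lcoset t A) (fun g => t * g)%g.
Proof.
split; first by move=> g Ag; exists g.
- by move=> g h _ _ /mulgI.
- by move=> _ [h Ah <-]; exists h.
Qed.

Lemma lcosets_lcoset H t C : lcosets H C -> lcosets H (lcoset t C).
Proof. by case=> y _ <-; exists (t * y)%g; rewrite ?lcosetM. Qed.

Section Subgroup.
Variable H : set G.
Hypothesis H_subgroup : is_subgroup H.

Lemma lcoset_refl x : lcoset x H x.
Proof. by case: H_subgroup => H1 _ _; exists 1%g; rewrite ?mulg1. Qed.

Lemma lcoset_id h : H h -> lcoset h H = H.
Proof.
case: H_subgroup => _ HM HV Hh; apply/seteqP; split => g /=.
- by move=> [k Hk <-]; apply: HM.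
- by move=> Hg; exists (h^-1 * g)%g; [apply: HM (HV _ Hh) Hg | rewrite mulVKg].
Qed.

Lemma lcoset_mem x y : lcoset x H y -> lcoset y H = lcoset x H.
Proof. by case=> h Hh <-; rewrite -lcosetM lcoset_id. Qed.

Lemma lcosets_disjoint C D : lcosets H C -> lcosets H D -> C != D ->
  C `&` D = set0.
Proof.
move=> [y _ <-] [z _ <-] yz; apply/seteqP; split => // g.
by case=> /lcoset_mem yg /lcoset_mem zg; move: yz; rewrite -yg -zg eqxx.
Qed.

End Subgroup.
End Cosets.

Section SchreierGraph.
Variables (G : groupType) (T : seq G).

Definition schreier_edge : rel (set G) :=
  fun C D => has (fun t => D == lcoset t C) T.

Definition translated_along_paths (g : G) : Prop :=
  forall C : set G, exists2 p, path schreier_edge C p & last C p = lcoset g C.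

Lemma path_lcosets H C p : path schreier_edge C p -> lcosets H C ->
  forall D, D \in C :: p -> lcosets H D.
Proof.
elim: p C => [|E p IHp] C /=.
  by move=> _ HC D; rewrite inE => /eqP ->.
case/andP=> /hasP[t _ /eqP ->] tCp HC D; rewrite inE => /orP[/eqP -> //|].
exact/IHp/lcosets_lcoset.
Qed.

Hypothesis T_inv : forall t, t \in T -> (t^-1)%g \in T.

Lemma schreier_edge_sym : symmetric schreier_edge.
Proof.
suff edge_rev C D : schreier_edge C D -> schreier_edge D C.
  by move=> C D; apply/idP/idP => /edge_rev.
case/hasP => t tT /eqP ->; apply/hasP; exists t^-1%g; first exact: T_inv.
by rewrite lcosetM mulVg lcoset1.
Qed.

Lemma translated_along_paths_subgroup : is_subgroup translated_along_paths.
Proof.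
split.
- by move=> C; exists [::]; rewrite ?lcoset1.
- move=> x y tx ty C; have [p1 ep1 lp1] := ty C.
  have [p2 ep2 lp2] := tx (lcoset y C).
  exists (p1 ++ p2); first by rewrite cat_path ep1 lp1 ep2.
  by rewrite last_cat lp1 lp2 lcosetM.
- move=> x tx C; have [p ep lp] := tx (lcoset x^-1 C).
  rewrite lcosetM mulgV lcoset1 in lp.
  exists (rev (belast (lcoset x^-1 C) p)).
    by rewrite -{1}lp rev_path (eq_path (fun D E => schreier_edge_sym E D)).
  case/lastP: p ep lp => [_ /= -> // | p D _ _].
  by rewrite belast_rcons rev_cons last_rcons.
Qed.

End SchreierGraph.

Lemma finitely_generated_translated_along_paths (G : groupType) :
  finitely_generated G ->
  exists T : seq G, forall g, translated_along_paths T g.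
Proof.
case=> S genS; set T := S ++ [seq s^-1 | s <- S]%g; exists T.
have T_inv t : t \in T -> (t^-1)%g \in T.
  rewrite !mem_cat => /orP[tS|/mapP[s sS ->]]; first by rewrite map_f ?orbT.
  by rewrite invgK sS.
suff -> : translated_along_paths T = setT by [].
apply: genS (translated_along_paths_subgroup T_inv) _ => s sS C.
exists [:: lcoset s C] => //=; rewrite andbT; apply/hasP.
by exists s; rewrite ?mem_cat ?sS.
Qed.

Section EsumNonneg.
Variables (R : realType) (T : choiceType) (a : T -> \bar R).
Hypothesis a_ge0 : forall x, (0 <= a x)%E.
Local Open Scope ereal_scope.

Lemma le_esum_subset A B :
  A `<=` B -> \esum_(i in A) a i <= \esum_(i in B) a i.
Proof.
move=> AB; rewrite esum_mkcond [leRHS]esum_mkcond; apply: le_esum => x _.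
case: ifPn => [/set_mem/AB/mem_set -> // | _]; by case: ifP.
Qed.

Lemma esum_setU A B : A `&` B = set0 ->
  \esum_(i in A `|` B) a i = \esum_(i in A) a i + \esum_(i in B) a i.
Proof.
by move=> AB0; rewrite (esumID A) // setUK -setDE setUKD ?AB0.
Qed.

Lemma esum_bigsetU (l : seq (set T)) : uniq l ->
  {in l &, forall A B, A != B -> A `&` B = set0} ->
  \esum_(i in \big[setU/set0]_(A <- l) A) a i =
  \sum_(A <- l) \esum_(i in A) a i.
Proof.
elim: l => [|A l IHl] /=; first by rewrite !big_nil esum_set0.
case/andP=> Al ul disj; rewrite !big_cons esum_setU ?IHl //.
  by move=> B C Bl Cl; apply: disj; rewrite inE ?Bl ?Cl orbT.
rewrite -bigcup_seq setI_bigcupr; apply/bigcup0P => B /= Bl; apply: disj.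
- exact: mem_head.
- by rewrite inE Bl orbT.
- by apply: contraNneq Al => ->.
Qed.

End EsumNonneg.

Lemma le0_of_natmul_le1 (R : archiRealFieldType) (x : R) :
  (forall k : nat, k%:R * x <= 1) -> x <= 0.
Proof.
move=> kx; rewrite leNgt; apply/negP => x_gt0.
have := @archi_boundP _ x^-1; rewrite invr_ge0 ltW // => /(_ isT).
by rewrite -(ltr_pM2r x_gt0) mulVf ?gt_eqF // ltNge kx.
Qed.

Section CosetMass.
Variables (R : realType) (G : groupType) (mu : G -> R).
Hypothesis mu_prob : is_prob mu.

Let mu_ge0 g : 0 <= mu g. Proof. by case: mu_prob. Qed.
Let muE_ge0 g : (0 <= (mu g)%:E)%E. Proof. by rewrite lee_fin. Qed.

Lemma pmeas_fin_num A : pmeas mu A \is a fin_num.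
Proof.
rewrite ge0_fin_numE ?esum_ge0 //; apply: le_lt_trans (ltey 1%E).
by case: mu_prob => _ <-; apply: le_esum_subset.
Qed.

Definition mass (A : set G) : R := fine (pmeas mu A).

Lemma massE A : (mass A)%:E = pmeas mu A.
Proof. by rewrite fineK ?pmeas_fin_num. Qed.

Lemma mass_ge0 A : 0 <= mass A.
Proof. by rewrite -lee_fin massE esum_ge0. Qed.

Lemma sum_mass_lcosets H l : is_subgroup H -> uniq l ->
    (forall C, C \in l -> lcosets H C) ->
  (\sum_(C <- l) mass C)%:E = pmeas mu (\big[setU/set0]_(C <- l) C).
Proof.
move=> sH ul lH; rewrite -sumEFin /pmeas esum_bigsetU //.
  by apply: eq_bigr => C _; rewrite massE.
by move=> C D /lH HC /lH HD; exact: (lcosets_disjoint sH HC HD).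
Qed.

Lemma sum_mass_lcosets_le1 H l : is_subgroup H -> uniq l ->
  (forall C, C \in l -> lcosets H C) -> \sum_(C <- l) mass C <= 1.
Proof.
move=> sH ul lH; rewrite -lee_fin (sum_mass_lcosets sH ul lH).
by case: mu_prob => _ <-; apply: le_esum_subset.
Qed.

Lemma dist_mass_lcoset t A :
  ((`|mass (lcoset t A) - mass A|)%:E <=
   \esum_(g in A) (`|mu (t * g)%g - mu g|)%:E)%E.
Proof.
set X := esum _ _.
have X_ge0 : (0 <= X)%E by apply: esum_ge0 => g _; rewrite lee_fin.
have le_shift (u v : G -> R) : (forall g, 0 <= v g) ->
    (forall g, `|u g - v g| = `|mu (t * g)%g - mu g|) ->
    (\esum_(g in A) (u g)%:E <= \esum_(g in A) (v g)%:E + X)%E.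
  move=> v_ge0 uv; rewrite -esumD => [|g _|g _]; rewrite ?lee_fin //.
  apply: le_esum => g _; rewrite -EFinD lee_fin -uv.
  have := ler_norm (u g - v g); lra.
have := le_shift (fun g => mu (t * g)%g) mu mu_ge0 (fun _ => erefl).
have := le_shift mu (fun g => mu (t * g)%g) (fun _ => mu_ge0 _)
  (fun _ => distrC _ _).
rewrite -(reindex_esum _ _ _ (fun g => (mu g)%:E) (lcoset_bij t A)).
rewrite -!/(pmeas mu _) -!massE.
clear le_shift; case: X X_ge0 => [x _ | _ _ _ | //]; last by rewrite leey.
by rewrite -!EFinD !lee_fin ler_distl => ? ?; apply/andP; split; lra.
Qed.

Lemma sum_dist_mass_lcosets t H V : is_subgroup H -> uniq V ->
    (forall C, C \in V -> lcosets H C) ->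
  ((\sum_(C <- V) `|mass (lcoset t C) - mass C|)%:E <= transl_dist mu t^-1)%E.
Proof.
move=> sH uV VH; rewrite -sumEFin.
apply: le_trans; first by apply: lee_sum => C _; exact: dist_mass_lcoset.
rewrite -esum_bigsetU => [|g|//|C D /VH HC /VH HD]; last first.
- exact: (lcosets_disjoint sH HC HD).
- by rewrite lee_fin.
by rewrite /transl_dist invgK; apply: le_esum_subset.
Qed.

Lemma dist_mass_lcosets_le T H y z :
    (forall g, translated_along_paths T g) -> is_subgroup H ->
  ((`|mass (lcoset z H) - mass (lcoset y H)|)%:E <=
   \sum_(t <- T) transl_dist mu t^-1)%E.
Proof.
move=> T_paths sH.
have [p ep] := T_paths (z * y^-1)%g (lcoset y H).
rewrite lcosetM mulgVK => lp.
pose b C := \sum_(t <- T) `|mass (lcoset t C) - mass C|.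
have edge C D : schreier_edge T C D -> `|mass D - mass C| <= b C.
  case/hasP => t tT /eqP ->.
  by rewrite /b (big_rem t tT) lerDl sumr_ge0.
have [V [uV Vp]] := uniq_path_variation edge ep; rewrite lp => bound.
apply: le_trans (_ : (\sum_(C <- V) b C)%:E <= _)%E; first by rewrite lee_fin.
rewrite /b exchange_big -sumEFin; apply: lee_sum => t _.
have yH_coset : lcosets H (lcoset y H) by exists y.
apply: sum_dist_mass_lcosets sH uV _ => C /Vp.
exact: path_lcosets ep yH_coset C.
Qed.

Lemma dist_mass_lcoset_inv_index H x d : is_subgroup H ->
    (forall y z, `|mass (lcoset y H) - mass (lcoset z H)| <= d) ->
  `|mass (lcoset x H) - inv_index R H| <= d.
Proof.
move=> sH near; set a := mass (lcoset x H).
have sum_const (c : R) (l : seq (set G)) : \sum_(C <- l) c = (size l)%:R * c.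
  by rewrite big_const_seq count_predT iter_addr_0 mulr_natl.
have sum_near l : (forall C, C \in l -> lcosets H C) ->
    (size l)%:R * (a - d) <= \sum_(C <- l) mass C <= (size l)%:R * (a + d).
  move=> lH; rewrite -!sum_const !big_seq; apply/andP.
  by split; apply: ler_sum => C /lH[z _ <-]; have := near z x;
    rewrite ler_distl => /andP[? ?].
rewrite /inv_index; case: pselect => [fin | infin] /=.
- set l := enum_fset (fset_set (lcosets H)).
  have lH C : C \in l -> lcosets H C by rewrite in_fset_set // => /set_mem.
  have cover : \big[setU/set0]_(C <- l) C = setT.
    apply/seteqP; split => // g _; rewrite -bigcup_seq.
    exists (lcoset g H); last exact: lcoset_refl.
    by rewrite /= in_fset_set ?mem_set //; exists g.
  have sum1 : \sum_(C <- l) mass C = 1.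
    apply: EFin_inj; rewrite (sum_mass_lcosets sH (fset_uniq _) lH) cover.
    by case: mu_prob.
  have xl : lcoset x H \in l by rewrite in_fset_set ?mem_set //; exists x.
  have k_gt0 : 0 < (size l)%:R :> R.
    by rewrite ltr0n lt0n size_eq0; apply: contraTneq xl => ->.
  have := sum_near l lH; rewrite sum1 => /andP[lo hi].
  move: (size l)%:R k_gt0 lo hi => k k_gt0 lo hi.
  have kK : k * k^-1 = 1 by rewrite mulfV ?gt_eqF.
  have kV_gt0 : 0 < k^-1 by rewrite invr_gt0.
  by rewrite ler_distl; apply/andP; split; nra.
- rewrite subr0 ger0_norm ?mass_ge0 // -subr_le0; apply: le0_of_natmul_le1 => k.
  have [B BH kB] := infinite_set_fset k infin.
  pose l := take k (enum_fset B).
  have lH C : C \in l -> lcosets H C by move=> /mem_take /BH.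
  have := sum_near l lH; rewrite size_takel // => /andP[lo _].
  exact: le_trans lo (sum_mass_lcosets_le1 sH (take_uniq _ (fset_uniq _)) lH).
Qed.

End CosetMass.

Theorem theorem1p13 (R : realType) (G : groupType) (mu : nat -> G -> R) :
  finitely_generated G ->
  (forall n, is_prob (mu n)) ->
  almost_invariant mu ->
  measures_index_uniformly mu.
Proof.
move=> /finitely_generated_translated_along_paths [T T_paths] mu_prob mu_inv.
move=> eps eps_gt0.
pose D n := (\sum_(t <- T) transl_dist (mu n) t^-1)%E.
have D_ge0 n : (0 <= D n)%E by apply: sume_ge0 => t _; apply: esum_ge0.
have D_cvg0 : D n @[n --> \oo] --> 0%E.
  have := @cvg_nnesum _ _ _ _ _ T (fun t n => transl_dist (mu n) t^-1)
    (fun=> 0%E) xpredT.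
  rewrite big1 //; apply => t _; last exact: mu_inv.
  by apply: nearW => n; apply: esum_ge0.
have [N _ DN] : \forall n \near \oo, (D n < eps%:E)%E.
  have eps_nbhs : \forall y \near 0%:E, (y < eps%:E)%E.
    by apply/nbhs_EFin; exact: lt_nbhsl.
  exact: D_cvg0 eps_nbhs.
exists N => n /DN Dn_lt x H sH.
have [d Dd] : exists d, D n = d%:E.
  exists (fine (D n)).
  by rewrite fineK // ge0_fin_numE // (lt_trans Dn_lt) ?ltey.
rewrite -(massE (mu_prob n)); apply: le_lt_trans Dn_lt; rewrite Dd lee_fin.
apply: dist_mass_lcoset_inv_index => // y z.
by rewrite -lee_fin -Dd distrC; apply: dist_mass_lcosets_le.
Qed.
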